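(* Let $L$ be a right Leibniz algebra and $I$ an ideal of $L$. (1) If $\mathrm{Ann}_L(I)=\{0\}$ (respectively $\mathrm{ran}_L(I)=\{0\}$), then $I$ is essential. (2) If $L$ is semiprime, then $I\cap\mathrm{Ann}_L(I)=\{0\}$ (respectively $I\cap\mathrm{ran}_L(I)=\{0\}$), and $I$ is essential if and only if $\mathrm{Ann}_L(I)=\{0\}$ (respectively if and only if $\mathrm{ran}_L(I)=\{0\}$).
   Context: A right Leibniz algebra satisfies $[x,[y,z]]=[[x,y],z]-[[x,z],y]$. Ideals: subspaces $I$ with $[I,L]\subseteq I$, $[L,I]\subseteq I$. $L$ is semiprime if $[J,J]\ne\{0\}$ for every nonzero ideal $J$. For $H\subseteq L$: $\mathrm{lan}_L(H)=\{x\in L:[x,y]=0\ \forall y\in H\}$, $\mathrm{ran}_L(H)=\{x\in L:[y,x]=0\ \forall y\in H\}$, $\mathrm{Ann}_L(H)=\mathrm{lan}_L(H)\cap\mathrm{ran}_L(H)$. An ideal $I$ is essential if $I\cap J\ne\{0\}$ for every nonzero ideal $J$ of $L$. *)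

From HB Require Import structures.
From mathcomp Require Import all_boot all_algebra.
Set Implicit Arguments. Unset Strict Implicit. Unset Printing Implicit Defensive.
Import GRing.Theory.
Local Open Scope ring_scope.

(* An algebra over a field K: a K-vector space V (arbitrary dimension)
   with a bracket br : V -> V -> V.  Subsets of V are predicates V -> Prop. *)

Definition bilinear_br (K : fieldType) (V : lmodType K) (br : V -> V -> V) : Prop :=
  (forall (a : K) (x y z : V), br (a *: x + y) z = a *: br x z + br y z) /\
  (forall (a : K) (x y z : V), br z (a *: x + y) = a *: br z x + br z y).

Definition right_leibniz (K : fieldType) (V : lmodType K) (br : V -> V -> V) : Prop :=
  bilinear_br br /\
  forall x y z : V, br x (br y z) = br (br x y) z - br (br x z) y.

Definition subspace (K : fieldType) (V : lmodType K) (S : V -> Prop) : Prop :=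
  S 0 /\ forall (a : K) (x y : V), S x -> S y -> S (a *: x + y).

Definition ideal (K : fieldType) (V : lmodType K) (br : V -> V -> V) (I : V -> Prop) : Prop :=
  subspace I /\ (forall x y : V, I x -> I (br x y) /\ I (br y x)).

(* S = {0} (for a subset containing 0) *)
Definition is_zero (K : fieldType) (V : lmodType K) (S : V -> Prop) : Prop :=
  forall x, S x -> x = 0.

Definition inter (T : Type) (A B : T -> Prop) : T -> Prop := fun x => A x /\ B x.

Definition lan (K : fieldType) (V : lmodType K) (br : V -> V -> V) (H : V -> Prop) : V -> Prop :=
  fun x => forall y, H y -> br x y = 0.
Definition ran (K : fieldType) (V : lmodType K) (br : V -> V -> V) (H : V -> Prop) : V -> Prop :=
  fun x => forall y, H y -> br y x = 0.
Definition Ann (K : fieldType) (V : lmodType K) (br : V -> V -> V) (H : V -> Prop) : V -> Prop :=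
  inter (lan br H) (ran br H).

Definition semiprime (K : fieldType) (V : lmodType K) (br : V -> V -> V) : Prop :=
  forall J, ideal br J -> ~ is_zero J ->
    ~ (forall x y, J x -> J y -> br x y = 0).

Definition essential (K : fieldType) (V : lmodType K) (br : V -> V -> V) (I : V -> Prop) : Prop :=
  forall J, ideal br J -> ~ is_zero J -> ~ is_zero (inter I J).

(* If [I] and [J] are ideals with [I ∩ J = 0], then [[I,J]] and [[J,I]] lie in
   [I ∩ J], so [J ⊆ Ann(I) ⊆ ran(I)]; this gives (1).  By the right Leibniz
   identity [ran(I)] is an ideal, and [I ∩ ran(I)] is an ideal with
   [[I ∩ ran(I), I ∩ ran(I)] = 0], hence zero in a semiprime algebra.  Thus
   [ran(I)] is an ideal disjoint from [I], which must vanish when [I] is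
   essential, and then so does [Ann(I) ⊆ ran(I)]. *)

From mathcomp Require Import all_boot all_algebra.
From Stdlib Require Import Classical.
Set Implicit Arguments.
Import GRing.Theory.
Local Open Scope ring_scope.

Lemma is_zero_sub {K : fieldType} {V : lmodType K} {A B : V -> Prop} :
  (forall x, A x -> B x) -> is_zero B -> is_zero A.
Proof. by move=> AB B0 x /AB /B0. Qed.

Section LeibnizIdeals.

Variables (K : fieldType) (V : lmodType K) (br : V -> V -> V).

Lemma ideal_inter (A B : V -> Prop) :
  ideal br A -> ideal br B -> ideal br (inter A B).
Proof.
move=> [[A0 Alin] Abr] [[B0 Blin] Bbr]; split; first split.
- by split.
- by move=> a x y [Ax Bx] [Ay By]; split; [exact: Alin | exact: Blin].
- move=> x y [Ax Bx]; have [Axy Ayx] := Abr x y Ax; have [Bxy Byx] := Bbr x y Bx.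
  by split; split.
Qed.

Lemma ideal_disjoint_sub_Ann (I J : V -> Prop) :
  ideal br I -> ideal br J -> is_zero (inter I J) ->
  forall x, J x -> Ann br I x.
Proof.
move=> [_ Ibr] [_ Jbr] IJ0 x Jx; split=> i Ii; apply: IJ0; split.
- exact: (Ibr i x Ii).2.
- exact: (Jbr x i Jx).1.
- exact: (Ibr i x Ii).1.
- exact: (Jbr x i Jx).2.
Qed.

Lemma essential_of_Ann_eq0 (I : V -> Prop) :
  ideal br I -> is_zero (Ann br I) -> essential br I.
Proof.
move=> HI Ann0 J HJ J_neq0 IJ0; apply: J_neq0.
exact: is_zero_sub (ideal_disjoint_sub_Ann HI HJ IJ0) Ann0.
Qed.

Lemma essential_disjoint_eq0 (I J : V -> Prop) :
  essential br I -> ideal br J -> is_zero (inter I J) -> is_zero J.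
Proof. by move=> Iess HJ IJ0; apply: NNPP => J_neq0; exact: Iess J HJ J_neq0 IJ0. Qed.

Lemma semiprime_inter_ran_eq0 (I : V -> Prop) :
  semiprime br -> ideal br I -> ideal br (ran br I) -> is_zero (inter I (ran br I)).
Proof.
move=> Lsp HI Hran; apply: NNPP => IR_neq0.
apply: (Lsp _ (ideal_inter HI Hran) IR_neq0) => x y [Ix _] [_ Ry].
exact: Ry.
Qed.

Hypothesis br_bilinear : bilinear_br br.

Lemma br0l z : br 0 z = 0.
Proof.
have := br_bilinear.1 1 0 0 z; rewrite scaler0 addr0 scale1r => e.
by apply: (@addrI _ (br 0 z)); rewrite addr0 -e.
Qed.

Lemma br0r z : br z 0 = 0.
Proof.
have := br_bilinear.2 1 0 0 z; rewrite scaler0 addr0 scale1r => e.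
by apply: (@addrI _ (br z 0)); rewrite addr0 -e.
Qed.

Hypothesis br_leibniz :
  forall x y z : V, br x (br y z) = br (br x y) z - br (br x z) y.

Lemma ideal_ran (I : V -> Prop) : ideal br I -> ideal br (ran br I).
Proof.
move=> [_ Ibr]; split; first split.
- by move=> i _; rewrite br0r.
- by move=> a x y Rx Ry i Ii; rewrite br_bilinear.2 Rx // Ry // scaler0 addr0.
- move=> x y Rx; have Iiy i : I i -> I (br i y) by move=> /(Ibr i y) [].
  by split=> i Ii; rewrite br_leibniz (Rx i Ii) (Rx _ (Iiy i Ii)) br0l subrr.
Qed.

End LeibnizIdeals.

Theorem proposition2p8 (K : fieldType) (V : lmodType K) (br : V -> V -> V)
  (I : V -> Prop) :
  right_leibniz br -> ideal br I ->
  ((is_zero (Ann br I) -> essential br I) /\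
   (is_zero (ran br I) -> essential br I)) /\
  (semiprime br ->
     is_zero (inter I (Ann br I)) /\ is_zero (inter I (ran br I)) /\
     (essential br I <-> is_zero (Ann br I)) /\
     (essential br I <-> is_zero (ran br I))).
Proof.
move=> [br_bilinear br_leibniz] HI.
have Hran := ideal_ran br_bilinear br_leibniz HI.
have Ann_sub_ran : forall x, Ann br I x -> ran br I x by move=> x [].
have Ann0_of_ran0 := is_zero_sub Ann_sub_ran.
have ess_of_Ann0 := essential_of_Ann_eq0 HI.
split; first by split=> // /Ann0_of_ran0.
move=> Lsp; have IR0 := semiprime_inter_ran_eq0 Lsp HI Hran.
have IA0 : is_zero (inter I (Ann br I)).
  by apply: is_zero_sub IR0 => x [Ix /Ann_sub_ran].
have ran0_of_ess : essential br I -> is_zero (ran br I).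
  by move=> Iess; exact: essential_disjoint_eq0 Iess Hran IR0.
do 2!split=> //; split; split=> //.
- by move=> /ran0_of_ess /Ann0_of_ran0.
- by move=> /Ann0_of_ran0.
Qed.
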